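(* Let $A\in M_2(\mathbb{R})$ and let $\mathcal{L}_A:\mathcal{S}^2\to\mathcal{S}^2$ be the Lyapunov map $\mathcal{L}_A(X)=AX+XA^t$. If $\mathcal{L}_A(CP_2)\subseteq CP_2$, then $A=\alpha I$ for some $\alpha>0$, and hence $\mathcal{L}_A$ is a constant multiple of the identity map.
   Context: $\mathcal{S}^n$ denotes the space of real symmetric $n\times n$ matrices. $CP_n=\{BB^t: B \text{ a real entrywise nonnegative } n\times k \text{ matrix for some } k\}$ is the cone of completely positive matrices; for $n=2$ it equals the set of symmetric matrices that are both positive semidefinite and entrywise nonnegative. *)

From HB Require Import structures.
From mathcomp Require Import all_boot all_order all_algebra.
Set Implicit Arguments. Unset Strict Implicit. Unset Printing Implicit Defensive.
Import Order.TTheory GRing.Theory Num.Theory.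
Local Open Scope ring_scope.

Definition completely_positive (R : realFieldType) (n : nat) (X : 'M[R]_n) : Prop :=
  exists (k : nat) (B : 'M[R]_(n, k)),
    (forall i j, 0 <= B i j) /\ X = B *m B^T.

Definition lyapunov (R : realFieldType) (n : nat) (A X : 'M[R]_n) : 'M[R]_n :=
  A *m X + X *m A^T.

From HB Require Import structures.
From mathcomp Require Import all_boot all_order all_algebra.
From mathcomp Require Import ring.
Import Order.TTheory GRing.Theory Num.Theory.

Set Implicit Arguments.
Unset Strict Implicit.
Unset Printing Implicit Defensive.

Local Open Scope ring_scope.

(* A completely positive matrix has nonnegative entries and, by Cauchy-Schwarz
   on the rows of B, nonnegative 2x2 principal minors.  Apply this to
   L_A(u u^T) = (A u) u^T + u (A u)^T for the nonnegative vectors u = e_i and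
   u = e_i + e_j: the first gives A_ii >= 0 and A_ji^2 <= 0, so A is diagonal,
   and the second then gives (A_ii + A_jj)^2 <= 4 A_ii A_jj, so A_ii = A_jj.
   Hence A = a I with a >= 0, and a <> 0 since A <> 0. *)

Lemma sum_mul_sqr_le (R : realFieldType) (I : finType) (a b : I -> R) :
  (\sum_i a i * b i) ^+ 2 <= (\sum_i a i ^+ 2) * (\sum_i b i ^+ 2).
Proof.
set p := \sum_i a i ^+ 2; set q := \sum_i a i * b i; set r := \sum_i b i ^+ 2.
have p_ge0 : 0 <= p by apply: sumr_ge0 => i _; apply: sqr_ge0.
have expand : \sum_i (p * b i - q * a i) ^+ 2 = p * (p * r - q ^+ 2).
  rewrite (eq_bigr (fun i => p ^+ 2 * b i ^+ 2 - (2 * p * q) * (a i * b i)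
                             + q ^+ 2 * a i ^+ 2)); last by move=> i _; ring.
  by rewrite big_split /= sumrB -!mulr_sumr -/p -/q -/r; ring.
have [p0 | p_neq0] := eqVneq p 0.
  have a0 i : a i = 0.
    apply/eqP; rewrite -sqrf_eq0; apply/eqP/(psumr_eq0P _ p0) => // j _.
    exact: sqr_ge0.
  by rewrite /q big1 => [|i _]; rewrite ?a0 ?mul0r ?p0 // expr0n mul0r.
have p_gt0 : 0 < p by rewrite lt_def p_neq0.
rewrite -subr_ge0 -(pmulr_rge0 _ p_gt0) -expand.
by apply: sumr_ge0 => i _; apply: sqr_ge0.
Qed.

Section CompletelyPositive.

Variables (R : realFieldType) (n : nat).
Implicit Types (M : 'M[R]_n) (u : 'cV[R]_n).

Lemma gram_mxE k (B : 'M[R]_(n, k)) i j :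
  (B *m B^T) i j = \sum_l B i l * B j l.
Proof. by rewrite mxE; apply: eq_bigr => l _; rewrite mxE. Qed.

Lemma completely_positive_ge0 M : completely_positive M -> forall i j, 0 <= M i j.
Proof.
move=> [k [B [B_ge0 ->]]] i j; rewrite gram_mxE.
by apply: sumr_ge0 => l _; apply: mulr_ge0.
Qed.

Lemma completely_positive_sqr_le M :
  completely_positive M -> forall i j, M i j ^+ 2 <= M i i * M j j.
Proof.
move=> [k [B [_ ->]]] i j; rewrite !gram_mxE.
rewrite [X in _ <= X * _](eq_bigr (fun l => B i l ^+ 2)) //.
rewrite [X in _ <= _ * X](eq_bigr (fun l => B j l ^+ 2)) //.
exact: sum_mul_sqr_le.
Qed.

Lemma completely_positive_rank1 u :
  (forall i, 0 <= u i 0) -> completely_positive (u *m u^T).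
Proof. by move=> u_ge0; exists 1%N, u; split=> // i j; rewrite ord1. Qed.

End CompletelyPositive.

Lemma lyapunov_rank1E (R : realFieldType) n (A : 'M[R]_n) (u : 'cV[R]_n) i j :
  lyapunov A (u *m u^T) i j = (A *m u) i 0 * u j 0 + u i 0 * (A *m u) j 0.
Proof.
by rewrite /lyapunov -mulmxA -trmx_mul mulmxA !mxE !big_ord1 !mxE.
Qed.

Lemma lyapunov_scalar (R : realFieldType) n (a : R) (X : 'M[R]_n) :
  lyapunov a%:M X = (2 * a) *: X.
Proof.
rewrite /lyapunov tr_scalar_mx mul_scalar_mx mul_mx_scalar -scalerDl.
by rewrite mulr2n mulrDl mul1r.
Qed.

Lemma mul_delta_mxE (R : realFieldType) m n (A : 'M[R]_(m, n)) i k :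
  (A *m (delta_mx i 0 : 'cV_n)) k 0 = A k i.
Proof. by rewrite -colE mxE. Qed.

Lemma delta_mx_ge0 {R : realFieldType} n i k : 0 <= (delta_mx i 0 : 'cV[R]_n) k 0.
Proof. by rewrite mxE ler0n. Qed.

Section CompletelyPositiveLyapunov.

Variables (R : realFieldType) (n : nat) (A : 'M[R]_n).
Hypothesis cpA : forall X : 'M[R]_n, X^T = X -> completely_positive X ->
  completely_positive (lyapunov A X).

Lemma lyapunov_rank1_cp (u : 'cV[R]_n) :
  (forall i, 0 <= u i 0) -> completely_positive (lyapunov A (u *m u^T)).
Proof.
move=> u_ge0; apply: cpA; first by rewrite trmx_mul trmxK.
exact: completely_positive_rank1.
Qed.

Lemma cp_lyapunov_diag_ge0 i : 0 <= A i i.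
Proof.
have := completely_positive_ge0 (lyapunov_rank1_cp (delta_mx_ge0 i)) i i.
by rewrite lyapunov_rank1E !mul_delta_mxE !mxE eqxx mulr1 mul1r -mulr2n pmulrn_lge0.
Qed.

Lemma cp_lyapunov_offdiag_eq0 i j : i != j -> A j i = 0.
Proof.
rewrite eq_sym => /negbTE ji_F.
have := completely_positive_sqr_le (lyapunov_rank1_cp (delta_mx_ge0 i)) i j.
rewrite !lyapunov_rank1E !mul_delta_mxE !mxE !eqxx ji_F /=.
rewrite !mulr0 !mul0r !mulr1 !mul1r !addr0 add0r mulr0 => sqr_le0.
by apply/eqP; rewrite -sqrf_eq0 eq_le sqr_le0 sqr_ge0.
Qed.

Lemma cp_lyapunov_diag_eq i j : A i i = A j j.
Proof.
have [-> // | neq_ij] := eqVneq i j.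
have /negbTE ij_F := neq_ij; have /negbTE ji_F : j != i by rewrite eq_sym.
pose u : 'cV[R]_n := delta_mx i 0 + delta_mx j 0.
have u_ge0 k : 0 <= u k 0 by rewrite mxE addr_ge0 ?delta_mx_ge0.
have uE k : u k 0 = (k == i)%:R + (k == j)%:R by rewrite !mxE !andbT.
have AuE k : (A *m u) k 0 = A k i + A k j.
  by rewrite mulmxDr [LHS]mxE !mul_delta_mxE.
have := completely_positive_sqr_le (lyapunov_rank1_cp u_ge0) i j.
rewrite !lyapunov_rank1E !AuE !uE !eqxx ij_F ji_F.
rewrite (cp_lyapunov_offdiag_eq0 neq_ij) (cp_lyapunov_offdiag_eq0 (negbT ji_F)) /=.
rewrite !(addr0, add0r, mulr1, mul1r) => sum_sqr_le.
apply/eqP; rewrite -subr_eq0 -sqrf_eq0 eq_le sqr_ge0 andbT.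
have -> : (A i i - A j j) ^+ 2
    = (A i i + A j j) ^+ 2 - (A i i + A i i) * (A j j + A j j) by ring.
by rewrite subr_le0.
Qed.

Lemma cp_lyapunov_scalar i : A = (A i i)%:M.
Proof.
apply/matrixP => k l; rewrite mxE.
have [<- | neq_lk] := eqVneq l k.
  by rewrite mulr1n (cp_lyapunov_diag_eq l i).
by rewrite (cp_lyapunov_offdiag_eq0 neq_lk) mulr0n.
Qed.

End CompletelyPositiveLyapunov.

Theorem mainTheorem2 (R : realFieldType) (A : 'M[R]_2) :
  A != 0 ->
  (forall X : 'M[R]_2, X^T = X -> completely_positive X ->
     completely_positive (lyapunov A X)) ->
  exists alpha : R, 0 < alpha /\ A = alpha%:M /\
    (forall X : 'M[R]_2, lyapunov A X = (2 * alpha) *: X).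
Proof.
move=> A_neq0 cpA.
have a_ge0 := cp_lyapunov_diag_ge0 cpA 0.
have := cp_lyapunov_scalar cpA 0; set a := A 0 0 => A_scalar.
exists a; split; last by split=> // X; rewrite A_scalar lyapunov_scalar.
rewrite lt_def a_ge0 andbT.
by apply: contra A_neq0 => /eqP a0; rewrite A_scalar a0 raddf0.
Qed.
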